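(* Let ${\bf a}=(a_1,\ldots,a_q),{\bf b}\in(2\mathbb N)^q$ and let $n\ge\max(2,q+1)$ be an integer. For $s=1,\ldots,q$ let ${\bf a}^{(s)}=(a_1,\ldots,a_{s-1},a_s+2,a_{s+1},\ldots,a_q)$. Then $$\Phi_n\begin{pmatrix}{\bf a}&2\\ {\bf b}&0\end{pmatrix}=\frac{1}{n-q}\left((\Sigma a_i+n-1)\,\Phi_n\begin{pmatrix}{\bf a}\\ {\bf b}\end{pmatrix}-\sum_{s=1}^q(a_s+1)\,\Phi_n\begin{pmatrix}{\bf a}^{(s)}\\ {\bf b}\end{pmatrix}\right).$$
   Context: Double factorial convention: for an integer $m\ge0$, $m!!=(m-1)(m-3)\cdots$, the product of the positive integers $\le m-1$ of the parity of $m-1$ (empty product $=1$). For a $2\times q$ matrix with nonnegative integer entries and $n\ge\max(2,q)$, $I_n\begin{pmatrix}{\bf a}\\{\bf b}\end{pmatrix}=\int_{O_n}\prod_j u_{1j}^{a_j}u_{2j}^{b_j}\,du$ (Haar probability measure) and $\Phi_n\begin{pmatrix}{\bf a}\\ {\bf b}\end{pmatrix}=\frac{(\Sigma a_i+n-2)!!\,(\Sigma b_i+n-2)!!}{(n-2)!!^2\,\prod a_i!!\,\prod b_i!!}\,I_n\begin{pmatrix}{\bf a}\\ {\bf b}\end{pmatrix}$. *)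

From HB Require Import structures.
From mathcomp Require Import all_boot all_order all_algebra.
From mathcomp Require Import all_classical all_reals all_analysis.
Set Implicit Arguments. Unset Strict Implicit. Unset Printing Implicit Defensive.
Import Order.TTheory GRing.Theory Num.Theory.
Local Open Scope classical_set_scope.
Local Open Scope ring_scope.

(* Double factorial with the paper's convention:
   m!! = (m-1)(m-3)... = product of positive integers <= m-1 of the parity of m-1. *)
Fixpoint dfact (m : nat) : nat :=
  match m with
  | 0 => 1
  | 1 => 1
  | (k.+1 as m').+1 => m' * dfact k
  end%N.

(* Entry (i,j) of an n x n matrix, indices as naturals (0 outside range). *)
Definition ent {R : pzRingType} {n : nat} (M : 'M[R]_n) (i j : nat) : R :=
  match @insub nat (fun k => k < n)%N 'I_n i, @insub nat (fun k => k < n)%N 'I_n j with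
  | Some i', Some j' => M i' j'
  | _, _ => 0
  end.

(* Sigma-algebra on n x n real matrices generated by the entry maps
   (= Borel sigma-algebra of R^(n*n)). *)
Definition mxT (R : realType) (n : nat) : Type := 'M[R]_n.
HB.instance Definition _ (R : realType) (n : nat) := Choice.on (mxT R n).
HB.instance Definition _ (R : realType) (n : nat) :=
  isPointed.Build (mxT R n) (0 : 'M[R]_n).

Definition mx_entry_sets (R : realType) (n : nat) : set (set (mxT R n)) :=
  \bigcup_(ij in [set: 'I_n * 'I_n])
     preimage_set_system [set: mxT R n] (fun M : mxT R n => (M : 'M[R]_n) ij.1 ij.2)
       measurable.

Definition MxSpace (R : realType) (n : nat) := g_sigma_algebraType (@mx_entry_sets R n).

Definition orthogonal_mx {R : pzRingType} {n : nat} (M : 'M[R]_n) : bool :=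
  M *m M^T == 1%:M.

Definition is_haar_On (R : realType) (n : nat) (mu : probability (MxSpace R n) R) : Prop :=
  mu [set M : MxSpace R n | orthogonal_mx (M : 'M[R]_n)] = 1%E /\
  forall (g : 'M[R]_n), orthogonal_mx g ->
    forall A : set (MxSpace R n), measurable A ->
      mu [set M : MxSpace R n | A (g *m (M : 'M[R]_n))] = mu A.

(* I_n (a ; b) = \int_{O_n} \prod_j u_{1j}^{a_j} u_{2j}^{b_j} du  (rows 1,2 are indices 0,1). *)
Definition I_On (R : realType) (n : nat) (mu : probability (MxSpace R n) R)
    (a b : seq nat) : R :=
  Rintegral mu [set: MxSpace R n]
    (fun M : MxSpace R n => \prod_(j < size a)
        (ent (M : 'M[R]_n) 0 j ^+ nth 0%N a j * ent (M : 'M[R]_n) 1 j ^+ nth 0%N b j)).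

Definition Phi_On (R : realType) (n : nat) (mu : probability (MxSpace R n) R)
    (a b : seq nat) : R :=
  ((dfact (sumn a + n - 2))%:R * (dfact (sumn b + n - 2))%:R)
  / ((dfact (n - 2))%:R ^+ 2 * (\prod_(x <- a) (dfact x)%:R) * (\prod_(x <- b) (dfact x)%:R))
  * I_On mu a b.

From HB Require Import structures.
From mathcomp Require Import all_boot all_order all_algebra.
From mathcomp Require Import all_classical all_reals all_analysis.
From mathcomp Require Import measurable_realfun.
From mathcomp Require Import zify ring.
Import Order.TTheory GRing.Theory Num.Theory.
Local Open Scope classical_set_scope.
Local Open Scope ring_scope.
Set Implicit Arguments. Unset Strict Implicit. Unset Printing Implicit Defensive.

(* Write [P] for the integrand of [I_n(a; b)] and [u] for the first row.  Since
   [u] is a unit vector, [I_n(a; b) = \sum_k \int P u_k^2]; the terms with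
   [k < q] are the integrals [I_n(a^(k); b)], and the [n - q] terms with
   [k >= q] are all equal to [I_n((a,2); (b,0))], because swapping two columns
   is a right translation by an orthogonal matrix and the Haar measure is right
   invariant too (by Fubini, right invariance follows from left invariance
   applied to transposes).  Normalising by double factorials, where
   [(m + 2)!! = (m + 1) m!!], turns this identity into the recursion for [Phi]. *)

Section MatrixMeasurability.
Variables (R : realType) (n : nat).
Local Notation T := (MxSpace R n).

Lemma measurable_mx_entry (i j : 'I_n) :
  measurable_fun setT (fun M : T => (M : 'M[R]_n) i j).
Proof. by move=> _ A mA; apply: sub_gen_smallest; exists (i, j) => //; exists A. Qed.

Definition mx_measurable d (X : measurableType d) (k : X -> 'M[R]_n) :=
  forall i j, measurable_fun setT (fun x => k x i j).

Lemma measurable_mx_fun d (X : measurableType d) (k : X -> T) :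
  mx_measurable (fun x => k x : 'M[R]_n) -> measurable_fun setT k.
Proof.
move=> mk; apply: (@measurability _ _ _ T setT k (@mx_entry_sets R n)) => //.
move=> _ [B [[i j] _ [A mA <-]] <-].
rewrite setTI preimage_setI preimage_setT setTI -comp_preimage.
by rewrite -[X in measurable X]setTI; apply: mk.
Qed.

Lemma mx_measurable_id : mx_measurable (fun M : T => M : 'M[R]_n).
Proof. exact: measurable_mx_entry. Qed.

Lemma mx_measurable_fun d (X : measurableType d) (k : X -> T) :
  measurable_fun setT k -> mx_measurable (fun x => k x : 'M[R]_n).
Proof. by move=> mk i j; exact: measurableT_comp (measurable_mx_entry i j) mk. Qed.

Lemma mx_measurable_mul d (X : measurableType d) (A B : X -> 'M[R]_n) :
  mx_measurable A -> mx_measurable B -> mx_measurable (fun x => A x *m B x).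
Proof.
move=> mA mB i j; under eq_fun do rewrite mxE.
by apply: measurable_sum => k; apply: measurable_funM.
Qed.

Lemma mx_measurable_tr d (X : measurableType d) (A : X -> 'M[R]_n) :
  mx_measurable A -> mx_measurable (fun x => (A x)^T).
Proof. by move=> mA i j; under eq_fun do rewrite mxE; exact: mA. Qed.

Lemma mx_measurable_cst d (X : measurableType d) (C : 'M[R]_n) :
  mx_measurable (fun _ : X => C).
Proof. by move=> i j; exact: measurable_cst. Qed.

Lemma measurable_mulmxl (g : 'M[R]_n) :
  measurable_fun setT (fun M : T => g *m M : T).
Proof.
apply: measurable_mx_fun; apply: mx_measurable_mul.
  exact: mx_measurable_cst.
exact: mx_measurable_id.
Qed.

Lemma measurable_mulmxr (h : 'M[R]_n) :
  measurable_fun setT (fun M : T => (M : 'M[R]_n) *m h : T).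
Proof.
apply: measurable_mx_fun; apply: mx_measurable_mul.
  exact: mx_measurable_id.
exact: mx_measurable_cst.
Qed.

Lemma measurable_trmx : measurable_fun setT (fun M : T => (M : 'M[R]_n)^T : T).
Proof. by apply: measurable_mx_fun; exact: mx_measurable_tr mx_measurable_id. Qed.

Lemma measurable_ent (i j : nat) :
  measurable_fun setT (fun M : T => ent (M : 'M[R]_n) i j).
Proof.
rewrite /ent; case: insub => [i'|]; last exact: measurable_cst.
by case: insub => [j'|]; [exact: measurable_mx_entry | exact: measurable_cst].
Qed.

Definition orthogonal_set : set T := [set M : T | orthogonal_mx (M : 'M[R]_n)].

Lemma measurable_orthogonal_set : measurable orthogonal_set.
Proof.
have -> : orthogonal_set = \bigcap_(ij in [set: 'I_n * 'I_n])
    [set M : T | ((M : 'M[R]_n) *m M^T) ij.1 ij.2 = (1%:M : 'M[R]_n) ij.1 ij.2].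
  apply/seteqP; split => M /=.
    by move=> /eqP MMt [i j] _ /=; rewrite MMt.
  by move=> MMt; apply/eqP/matrixP => i j; exact: (MMt (i, j) I).
apply: fin_bigcap_measurable; first exact: finite_finset.
move=> [i j] _; rewrite -[X in measurable X]setTI.
exact: mx_measurable_mul mx_measurable_id (mx_measurable_tr mx_measurable_id)
  i j measurableT _ (measurable_set1 _).
Qed.

End MatrixMeasurability.

Arguments orthogonal_set {R n}.
Arguments measurable_orthogonal_set {R n}.
Arguments measurable_trmx {R n}.
Arguments measurable_mulmxl {R n}.
Arguments measurable_mulmxr {R n}.
Arguments measurable_ent {R n}.

Section OrthogonalEntries.
Variables (R : comUnitRingType) (n : nat).

Lemma ent_ord (M : 'M[R]_n) (i j : 'I_n) : ent M i j = M i j.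
Proof. by rewrite /ent !valK. Qed.

Lemma ent_out (M : 'M[R]_n) (i j : nat) : (n <= i)%N || (n <= j)%N -> ent M i j = 0.
Proof.
rewrite /ent; case/orP => out; first by rewrite insubF // ltnNge out.
by case: insub => //; rewrite insubF // ltnNge out.
Qed.

Lemma orthogonal_trmx (g : 'M[R]_n) : orthogonal_mx g -> orthogonal_mx g^T.
Proof. by rewrite /orthogonal_mx trmxK => /eqP gK; apply/eqP; exact: mulmx1C. Qed.

Lemma orthogonal_tperm (k1 k2 : 'I_n) : orthogonal_mx (tperm_mx k1 k2 : 'M[R]_n).
Proof. by apply/eqP; rewrite tr_tperm_mx -perm_mxM perm.tperm2 perm_mx1. Qed.

Lemma ent_mulmx_tperm (M : 'M[R]_n) (k1 k2 : 'I_n) (i j : nat) :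
  ent (M *m tperm_mx k1 k2) i j =
  ent M i (if j == k1 :> nat then k2 : nat else if j == k2 :> nat then k1 : nat else j).
Proof.
have [i_n|] := ltnP i n; last by move=> ni; rewrite !ent_out ?ni.
have [j_n|nj] := ltnP j n; last first.
  rewrite !ifN ?ent_out ?nj ?orbT //.
    by apply: contraTneq nj => ->; rewrite -ltnNge.
  by apply: contraTneq nj => ->; rewrite -ltnNge.
pose i' := Ordinal i_n; pose j' := Ordinal j_n.
rewrite -xcolE -[i]/(nat_of_ord i') -[j]/(nat_of_ord j') ent_ord mxE.
case: perm.tpermP => [->|->|jk1 jk2]; rewrite ?eqxx ?ent_ord //.
  by case: eqP => [/val_inj ->|]; rewrite ent_ord.
by rewrite !(inj_eq val_inj) (introF eqP jk1) (introF eqP jk2) ent_ord.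
Qed.

Lemma orthogonal_row_sqr_sum (M : 'M[R]_n) (i : 'I_n) : orthogonal_mx M ->
  \sum_(0 <= k < n) ent M i k ^+ 2 = 1.
Proof.
move=> /eqP MMt; have : (M *m M^T) i i = 1 by rewrite MMt mxE eqxx.
rewrite mxE => <-; rewrite big_mkord; apply: eq_bigr => k _.
by rewrite mxE ent_ord expr2.
Qed.

End OrthogonalEntries.

Arguments orthogonal_tperm {R n}.

Lemma orthogonal_ent_norm_le1 (R : realDomainType) (n : nat) (M : 'M[R]_n)
    (i j : nat) : orthogonal_mx M -> `|ent M i j| <= 1.
Proof.
move=> oM; have [/andP[i_n j_n]|] := boolP ((i < n) && (j < n))%N; last first.
  by rewrite negb_and -!leqNgt => /ent_out ->; rewrite normr0 ler01.
rewrite -(expr_le1 (n := 2)) // real_normK ?num_real //.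
rewrite -(orthogonal_row_sqr_sum (Ordinal i_n) oM) (big_cat_nat (leq0n j) (ltnW j_n)) /=.
rewrite [X in _ + X]big_ltn //= addrCA lerDl.
by rewrite addr_ge0 // sumr_ge0 // => k _; exact: sqr_ge0.
Qed.

Lemma integral_cst_probability d (X : measurableType d) (R : realType)
    (P : probability X R) (c : \bar R) :
  (\int[P]_x c = c)%E.
Proof.
rewrite (integral_cst P measurableT) -[RHS]mule1; congr (_ * _)%E.
exact: probability_setT.
Qed.

Section HaarIntegral.
Variables (R : realType) (n : nat) (mu : probability (MxSpace R n) R).
Hypothesis haar : is_haar_On mu.
Local Notation T := (MxSpace R n).

Lemma ae_orthogonal (P : T -> Prop) :
  (forall M, orthogonal_set M -> P M) -> {ae mu, forall M, P M}.
Proof.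
move=> oP; exists (~` orthogonal_set); split.
- exact: measurableC measurable_orthogonal_set.
- by rewrite probability_setC ?haar.1 ?subee //; exact: measurable_orthogonal_set.
- by move=> M /= nPM oM; apply: nPM; exact: oP.
Qed.

Lemma orthogonal_eq_integral (f g : T -> \bar R) :
  measurable_fun setT f -> measurable_fun setT g ->
  (forall M, orthogonal_set M -> f M = g M) -> (\int[mu]_M f M = \int[mu]_M g M)%E.
Proof.
move=> mf mg fg; apply: ae_eq_integral => //.
by apply: ae_orthogonal => M oM _; exact: fg.
Qed.

Lemma integral_mulmxl (f : T -> \bar R) (g : 'M[R]_n) :
  measurable_fun setT f -> (forall M, (0 <= f M)%E) -> orthogonal_mx g ->
  (\int[mu]_M f (g *m M : T) = \int[mu]_M f M)%E.
Proof.
move=> mf f_ge0 og; have := ge0_integral_pushforward (measurable_mulmxl g) mu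
  measurableT mf (fun M _ => f_ge0 M).
rewrite preimage_setT => <-.
apply: eq_measure_integral; first exact: measurable_mulmxl.
by move=> ? A mA _; exact: haar.2 g og A mA.
Qed.

Lemma integral_trmx (f : T -> \bar R) :
  measurable_fun setT f -> (forall M, (0 <= f M)%E) ->
  (\int[mu]_M f M = \int[mu]_M f ((M : 'M[R]_n)^T : T))%E.
Proof.
move=> mf f_ge0.
pose F (p : T * T) := f (((p.1 : 'M[R]_n)^T *m p.2 : 'M[R]_n) : T).
have mF : measurable_fun setT F.
  apply: measurableT_comp mf _; apply: measurable_mx_fun; apply: mx_measurable_mul.
    by apply: mx_measurable_tr; exact: mx_measurable_fun measurable_fst.
  exact: mx_measurable_fun measurable_snd.
have F_ge0 p : (0 <= F p)%E by exact: f_ge0.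
have mfT := measurableT_comp mf measurable_trmx.
(* Both sides equal the double integral of [f (M^T N)]: integrate in [N] first
   by left invariance under [M^T], or in [M] first by left invariance of
   [f \o trmx] under [N^T]. *)
rewrite -[LHS](integral_cst_probability mu) -[RHS](integral_cst_probability mu).
transitivity (\int[mu]_M \int[mu]_N F (M, N))%E.
  apply: orthogonal_eq_integral; first exact: measurable_cst.
    exact: measurable_fun_fubini_tonelli_F.
  by move=> M oM; rewrite /F /= (integral_mulmxl mf f_ge0 (orthogonal_trmx oM)).
rewrite (fubini_tonelli F mF F_ge0); apply: orthogonal_eq_integral.
- exact: measurable_fun_fubini_tonelli_G.
- exact: measurable_cst.
- move=> N oN; rewrite /F /=.
  under eq_integral do rewrite -[(_ *m _)%R]trmxK trmx_mul trmxK.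
  exact: integral_mulmxl mfT (fun M => f_ge0 _) (orthogonal_trmx oN).
Qed.

Lemma integral_mulmxr (f : T -> \bar R) (h : 'M[R]_n) :
  measurable_fun setT f -> (forall M, (0 <= f M)%E) -> orthogonal_mx h ->
  (\int[mu]_M f ((M : 'M[R]_n) *m h : T) = \int[mu]_M f M)%E.
Proof.
move=> mf f_ge0 oh.
have mfh := measurableT_comp mf (measurable_mulmxr h).
have mfT := measurableT_comp mf measurable_trmx.
rewrite (integral_trmx mfh (fun M => f_ge0 _)) [RHS](integral_trmx mf f_ge0).
under eq_integral do rewrite /= -[(_ *m _)%R]trmxK trmx_mul trmxK.
exact: integral_mulmxl mfT (fun M => f_ge0 _) (orthogonal_trmx oh).
Qed.

Lemma integral_le1_fin_num (f : T -> R) : measurable_fun setT f ->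
  (forall M, 0 <= f M) -> (forall M, orthogonal_set M -> f M <= 1) ->
  (\int[mu]_M (f M)%:E)%E \is a fin_num.
Proof.
move=> mf f_ge0 f_le1; rewrite ge0_fin_numE; last first.
  by apply: integral_ge0 => M _; rewrite lee_fin.
apply: (@le_lt_trans _ _ (\int[mu]_M 1)%E); last by rewrite integral_cst_probability ltry.
apply: ae_ge0_le_integral => //.
- by move=> M _; rewrite lee_fin.
- exact/measurable_EFinP.
- by apply: ae_orthogonal => M oM _; rewrite lee_fin f_le1.
Qed.

End HaarIntegral.

Definition moment_integrand (R : pzRingType) (n : nat) (a b : seq nat)
    (M : 'M[R]_n) : R :=
  \prod_(j < size a) (ent M 0 j ^+ nth 0%N a j * ent M 1 j ^+ nth 0%N b j).

Lemma nth_even (s : seq nat) (j : nat) :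
  all (fun x => ~~ odd x) s -> ~~ odd (nth 0%N s j).
Proof.
move=> s_even; have [j_lt|j_ge] := ltnP j (size s); first exact: (all_nthP 0%N s_even).
by rewrite nth_default.
Qed.

Lemma even_expr_norm_le1 (R : realDomainType) (x : R) (k : nat) :
  `|x| <= 1 -> ~~ odd k -> 0 <= x ^+ k <= 1.
Proof.
move=> x_le1 k_even; rewrite exprn_even_ge0 //=.
by rewrite (le_trans (ler_norm _)) // normrX exprn_ile1.
Qed.

Section MomentIntegrand.
Variables (a b : seq nat).
Hypotheses (a_even : all (fun x => ~~ odd x) a) (b_even : all (fun x => ~~ odd x) b).

Lemma moment_integrand_ge0 (R : realDomainType) (n : nat) (M : 'M[R]_n) :
  0 <= moment_integrand a b M.
Proof. by apply: prodr_ge0 => j _; rewrite mulr_ge0 // exprn_even_ge0 // nth_even. Qed.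

Lemma orthogonal_moment_integrand_le1 (R : realDomainType) (n : nat) (M : 'M[R]_n) :
  orthogonal_mx M -> moment_integrand a b M <= 1.
Proof.
move=> oM; apply: prodr_ile1 => j _.
have /andP[x_ge0 x_le1] :=
  even_expr_norm_le1 (orthogonal_ent_norm_le1 0 j oM) (nth_even j a_even).
have /andP[y_ge0 y_le1] :=
  even_expr_norm_le1 (orthogonal_ent_norm_le1 1 j oM) (nth_even j b_even).
by rewrite mulr_ge0 // mulr_ile1.
Qed.

End MomentIntegrand.

Lemma measurable_moment_integrand (R : realType) (n : nat) (a b : seq nat) :
  measurable_fun setT (fun M : MxSpace R n => moment_integrand a b (M : 'M[R]_n)).
Proof.
apply: measurable_prod => j _.
by apply: measurable_funM; apply: measurable_funX; exact: measurable_ent.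
Qed.

Section MomentRecursion.
Variables (R : realType) (n : nat) (mu : probability (MxSpace R n) R).
Hypothesis haar : is_haar_On mu.
Variables (a b : seq nat).
Hypotheses (size_b : size b = size a) (size_a_lt : (size a < n)%N)
  (a_even : all (fun x => ~~ odd x) a) (b_even : all (fun x => ~~ odd x) b).
Local Notation T := (MxSpace R n).
Local Notation q := (size a).

Let P (M : T) : R := moment_integrand a b (M : 'M[R]_n).
Let weighted (k : nat) (M : T) : R := P M * ent (M : 'M[R]_n) 0 k ^+ 2.
Let J (k : nat) : \bar R := \int[mu]_M (weighted k M)%:E.

Let measurable_weighted k : measurable_fun setT (weighted k).
Proof.
apply: measurable_funM; first exact: measurable_moment_integrand.
by apply: measurable_funX; exact: measurable_ent.
Qed.

Let weighted_ge0 k M : 0 <= weighted k M.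
Proof. by rewrite mulr_ge0 ?sqr_ge0 ?moment_integrand_ge0. Qed.

Let J_fin_num k : J k \is a fin_num.
Proof.
apply: integral_le1_fin_num => // M oM.
rewrite mulr_ile1 ?sqr_ge0 ?moment_integrand_ge0 ?orthogonal_moment_integrand_le1 //.
by rewrite -real_normK ?num_real // exprn_ile1 ?orthogonal_ent_norm_le1.
Qed.

Lemma I_On_rcons : I_On mu (rcons a 2) (rcons b 0) = fine (J q).
Proof.
rewrite /I_On /Rintegral; congr fine; apply: eq_integral => M _; congr EFin.
rewrite size_rcons big_ord_recr /= !nth_rcons size_b ltnn eqxx expr0 mulr1.
congr (_ * _); apply: eq_bigr => j _.
by rewrite !nth_rcons size_b ltn_ord.
Qed.

Lemma I_On_set_nth (s : 'I_q) :
  I_On mu (set_nth 0%N a s (nth 0%N a s + 2)%N) b = fine (J s).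
Proof.
rewrite /I_On /Rintegral; congr fine; apply: eq_integral => M _; congr EFin.
rewrite size_set_nth (maxn_idPr (ltn_ord s)) /weighted /P /moment_integrand.
rewrite (bigD1 s) //= [in RHS](bigD1 s) //= nth_set_nth /= eqxx exprD.
rewrite (eq_bigr (fun j : 'I_q => ent (M : 'M[R]_n) 0 j ^+ nth 0%N a j *
    ent (M : 'M[R]_n) 1 j ^+ nth 0%N b j)); first ring.
by move=> j js; rewrite nth_set_nth /= (negbTE (js : (j : nat) != s)).
Qed.

Lemma integral_moment_row_expansion :
  (\int[mu]_M (P M)%:E = \sum_(0 <= k < n) J k)%E.
Proof.
pose i0 : 'I_n := Ordinal (leq_ltn_trans (leq0n _) size_a_lt).
transitivity (\int[mu]_M (\sum_(0 <= k < n) weighted k M)%:E)%E.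
  apply: orthogonal_eq_integral => //.
  - by apply/measurable_EFinP; exact: measurable_moment_integrand.
  - by apply/measurable_EFinP; exact: measurable_sum.
  - by move=> M oM; rewrite -mulr_sumr (orthogonal_row_sqr_sum i0 oM) mulr1.
under eq_integral do rewrite -sumEFin.
apply: ge0_integral_sum => // k; first exact/measurable_EFinP.
by move=> M _; rewrite lee_fin.
Qed.

Lemma weighted_moment_tail (k : nat) : (q <= k < n)%N -> J k = J q.
Proof.
case/andP => q_le_k k_lt_n.
pose kk : 'I_n := Ordinal k_lt_n; pose qq : 'I_n := Ordinal size_a_lt.
rewrite /J -(integral_mulmxr haar (f := fun M => (weighted q M)%:E) _ _
  (orthogonal_tperm qq kk)).
- apply: eq_integral => M _; congr EFin.
  rewrite /weighted /P /moment_integrand ent_mulmx_tperm /= eqxx.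
  congr (_ * _); apply: eq_bigr => j _.
  rewrite !ent_mulmx_tperm /= (ltn_eqF (ltn_ord j)).
  by rewrite (ltn_eqF (leq_trans (ltn_ord j) q_le_k)).
- exact/measurable_EFinP.
- by move=> M; rewrite lee_fin.
Qed.

Lemma I_On_recursion :
  I_On mu a b = \sum_(s < q) I_On mu (set_nth 0%N a s (nth 0%N a s + 2)%N) b
                + (n - q)%:R * I_On mu (rcons a 2) (rcons b 0).
Proof.
have P_fin : (\int[mu]_M (P M)%:E)%E \is a fin_num.
  apply: integral_le1_fin_num => //; first exact: measurable_moment_integrand.
    by move=> M; exact: moment_integrand_ge0.
  by move=> M; exact: orthogonal_moment_integrand_le1.
rewrite I_On_rcons (eq_bigr _ (fun s _ => I_On_set_nth s)).
apply: EFin_inj; rewrite -[I_On mu a b]/(fine _) fineK // integral_moment_row_expansion.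
rewrite (big_cat_nat (leq0n q) (ltnW size_a_lt)) /= (eq_big_nat _ _ weighted_moment_tail).
rewrite sumr_const_nat EFinD -sumEFin big_mkord mulr_natl EFin_natmul fineK //.
by congr (_ + _)%E; apply: eq_bigr => s _; rewrite fineK.
Qed.

End MomentRecursion.

Lemma dfact_gt0 (m : nat) : (0 < dfact m)%N.
Proof.
suff : (0 < dfact m)%N /\ (0 < dfact m.+1)%N by case.
by elim: m => [|m [m_gt0 Sm_gt0]] //=; rewrite muln_gt0 Sm_gt0.
Qed.

Lemma sumn_set_nth_add2 (s : seq nat) (i : nat) : (i < size s)%N ->
  sumn (set_nth 0%N s i (nth 0%N s i + 2)%N) = (sumn s + 2)%N.
Proof.
elim: s i => [|x s IHs] [|i] //= i_lt; first by rewrite addnAC.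
by rewrite IHs // addnA.
Qed.

Lemma prod_dfact_set_nth_add2 (R : comPzSemiRingType) (s : seq nat) (i : nat) :
  (i < size s)%N ->
  \prod_(x <- set_nth 0%N s i (nth 0%N s i + 2)%N) (dfact x)%:R =
  (\prod_(x <- s) (dfact x)%:R) * (nth 0%N s i).+1%:R :> R.
Proof.
elim: s i => [|x s IHs] [|i] //= i_lt; rewrite !big_cons.
  by rewrite addn2 /= natrM; ring.
by rewrite IHs // mulrA.
Qed.

Theorem lemma4p1 (R : realType) (n : nat) (mu : probability (MxSpace R n) R)
    (a b : seq nat) :
  size b = size a ->
  all (fun x => ~~ odd x) a -> all (fun x => ~~ odd x) b ->
  (maxn 2 (size a).+1 <= n)%N ->
  is_haar_On mu ->
  Phi_On mu (rcons a 2%N) (rcons b 0%N) =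
    (n - size a)%:R^-1 *
      ((sumn a + n - 1)%:R * Phi_On mu a b
       - \sum_(s < size a)
           (nth 0%N a s + 1)%N%:R * Phi_On mu (set_nth 0%N a s (nth 0%N a s + 2)%N) b).
Proof.
move=> size_b a_even b_even; rewrite geq_max => /andP[n_ge2 size_a_lt] haar.
have dfact_add2 :
    dfact (sumn a + 2 + n - 2) = ((sumn a + n - 1) * dfact (sumn a + n - 2))%N.
  by rewrite (_ : sumn a + 2 + n - 2 = (sumn a + n - 2).+2)%N; [congr (_ * _)%N|]; lia.
have nat_neq0 (m : nat) : (0 < m)%N -> m%:R != 0 :> R by rewrite pnatr_eq0 -lt0n.
have prod_dfact_neq0 (s : seq nat) : \prod_(x <- s) (dfact x)%:R != 0 :> R.
  by rewrite prodf_seq_neq0; apply/allP => x _; rewrite nat_neq0 ?dfact_gt0.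
pose K : R := (dfact (sumn a + n - 2))%:R * (dfact (sumn b + n - 2))%:R /
  ((dfact (n - 2))%:R ^+ 2 * \prod_(x <- a) (dfact x)%:R * \prod_(x <- b) (dfact x)%:R).
have Phi_rcons : Phi_On mu (rcons a 2) (rcons b 0) =
    (sumn a + n - 1)%:R * K * I_On mu (rcons a 2) (rcons b 0).
  rewrite /Phi_On !sumn_rcons addn0 !big_rcons /= dfact_add2 natrM !muln1 /K.
  by field; rewrite !prod_dfact_neq0 nat_neq0 ?dfact_gt0.
have Phi_set_nth (s : 'I_(size a)) :
    (nth 0%N a s + 1)%:R * Phi_On mu (set_nth 0%N a s (nth 0%N a s + 2)%N) b =
    (sumn a + n - 1)%:R * K * I_On mu (set_nth 0%N a s (nth 0%N a s + 2)%N) b.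
  rewrite /Phi_On sumn_set_nth_add2 // prod_dfact_set_nth_add2 //.
  rewrite dfact_add2 natrM /K.
  by field; rewrite !prod_dfact_neq0 nat_neq0 ?dfact_gt0 //= addrC natr1 nat_neq0.
rewrite Phi_rcons (eq_bigr _ (fun s _ => Phi_set_nth s)) -mulr_sumr.
rewrite /Phi_On -/K (I_On_recursion haar size_b size_a_lt a_even b_even).
by field; rewrite nat_neq0 ?subn_gt0.
Qed.
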